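(* Let $n>m\ge1$, $T\ge1$, $0<\gamma<1$, $x_0,\dots,x_T\in\mathbb{R}^m$, let $\sigma:\mathbb{R}\to[-1,1]$ be continuously differentiable (applied componentwise), and let $H\in\mathbb{R}^{m\times n}$ be the projection onto the first $m$ coordinates. Fix a policy $\pi_i=(F_i,G_i)$ and let $\Delta\pi=-\nabla_\pi J'_{\pi_i}(\pi)\big|_{\pi=\pi_i}$, where $J'_{\pi_i}(\pi)=c(\mathbf{U}_{\pi_i})+\gamma J^{\pi_i}(S_\pi\mathbf{U}_{\pi_i})$. If $\Delta\pi\neq 0$, then there exists $\alpha_0>0$ such that for all $0<\alpha\le\alpha_0$, $$J^{\pi_i+\alpha\Delta\pi}(\mathbf{U}_{\pi_i})<J^{\pi_i}(\mathbf{U}_{\pi_i}).$$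
   Context: A policy is a pair $\pi=(F,G)$ with $F\in\mathbb{R}^{n\times n}$, $G\in\mathbb{R}^{n\times(m+1)}$, identified with a vector in $\mathbb{R}^{n(n+m+1)}$ (so sums, scalar multiples and gradients with respect to $\pi$ are taken componentwise). A state is a sequence $\mathbf{U}=(u_0,u_1,\dots,u_T)$ with $u_t\in\mathbb{R}^n$. For $x\in\mathbb{R}^m$, $[x;1]\in\mathbb{R}^{m+1}$ is $x$ with a $1$ appended. Define $S_\pi\mathbf{U}=(u'_0,\dots,u'_T)$ by $u'_0=0$ and $u'_{t+1}=\sigma(Fu_t+G[x_t;1])$ for $0\le t<T$. Let $\mathbf{U}_\pi=(u_0,\dots,u_T)$ be the network trajectory $u_0=0$, $u_{t+1}=\sigma(Fu_t+G[x_t;1])$ for $0\le t<T$. The immediate cost is $c(\mathbf{U})=\sum_{t=1}^T\|Hu_t-x_t\|^2$ (Euclidean norm), and the discounted cost of state $\mathbf{U}$ under policy $\pi$ is $J^\pi(\mathbf{U})=\sum_{k=0}^\infty\gamma^k c(S_\pi^k\mathbf{U})$. *)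

From HB Require Import structures.
From mathcomp Require Import all_boot all_order all_algebra.
From mathcomp Require Import all_classical all_reals all_analysis.
Set Implicit Arguments. Unset Strict Implicit. Unset Printing Implicit Defensive.
Import Order.TTheory GRing.Theory Num.Theory.
Import numFieldNormedType.Exports.
Local Open Scope ring_scope.

Section RNN.
Variables (R : realType) (n m T : nat).
Variable sigma : R -> R.
Variable gamma : R.
Variable x : 'I_T.+1 -> 'cV[R]_m.

Definition policy := ('M[R]_n * 'M[R]_(n, m + 1))%type.

Definition state := 'I_T.+1 -> 'cV[R]_n.

Definition ext1 (v : 'cV[R]_m) : 'cV[R]_(m + 1) := col_mx v (const_mx 1).

Definition step (pi : policy) (u : 'cV[R]_n) (t : 'I_T.+1) : 'cV[R]_n :=
  map_mx sigma (pi.1 *m u + pi.2 *m ext1 (x t)).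

Definition S (pi : policy) (U : state) : state :=
  fun t => match val t with
           | 0 => 0
           | k.+1 => step pi (U (inord k)) (inord k)
           end.

Fixpoint traj (pi : policy) (k : nat) : 'cV[R]_n :=
  match k with
  | 0 => 0
  | k'.+1 => step pi (traj pi k') (inord k')
  end.

Definition Utraj (pi : policy) : state := fun t => traj pi (val t).

Definition H : 'M[R]_(m, n) := \matrix_(i < m, j < n) ((i : nat) == j)%:R.

Definition sqnorm k (v : 'cV[R]_k) : R := \sum_(i < k) (v i 0) ^+ 2.

Definition cost (U : state) : R :=
  \sum_(t < T.+1 | t != ord0) sqnorm (H *m U t - x t).

Definition J (pi : policy) (U : state) : R :=
  limn (fun N => \sum_(0 <= k < N) (gamma ^+ k * cost (iter k (S pi) U))).

Definition Jprime (pii : policy) (pi : policy) : R :=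
  cost (Utraj pii) + gamma * J pii (S pi (Utraj pii)).

Definition pderiv (f : policy -> R) (p v : policy) : R :=
  derive1 (fun h : R => f (p + h *: v)) 0.

Definition grad (f : policy -> R) (p : policy) : policy :=
  (\matrix_(i < n, j < n) pderiv f p (delta_mx i j, 0),
   \matrix_(i < n, j < m + 1) pderiv f p (0, delta_mx i j)).

Definition Dpi (pii : policy) : policy := - grad (Jprime pii) pii.

End RNN.

From HB Require Import structures.
From mathcomp Require Import all_boot all_order all_algebra.
From mathcomp Require Import all_classical all_reals all_analysis.
From mathcomp Require Import ring lra.
Import Order.TTheory GRing.Theory Num.Theory.
Import numFieldNormedType.Exports.
Local Open Scope ring_scope.

(* For k > T the iterate S_pi^k U is the trajectory U_pi, a fixed point of S_pi, so the series
   J^pi(U) is a finite sum plus a geometric tail: it is differentiable in pi and satisfies the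
   Bellman equation J^pi(U) = c(U) + gamma J^pi(S_pi U).  Put U0 = U_{pi_i} and
   Psi(p, q) = J^p(S_q U0).  Then J^q(U0) = c(U0) + gamma Psi(q, q), Psi(q, pi_i) = J^q(U0) and
   J'_{pi_i}(q) = c(U0) + gamma Psi(pi_i, q), so differentiating at pi_i along v gives
   (1 - gamma) D_v [q |-> J^q(U0)] = D_v J'_{pi_i}.  Along v = Delta pi the right-hand side is
   -|grad J'_{pi_i}|^2 < 0, hence J^q(U0) decreases along q = pi_i + alpha Delta pi for small
   alpha > 0. *)

Section EntrywiseDifferentiable.
Context {R : realType}.

Lemma differentiable_fst {U W : normedModType R} (u : U * W) :
  differentiable (@fst U W) u.
Proof.
have @f : {linear (U * W)%type -> U}.
  by exists (@fst U W); do 2![eexists]; do ?[constructor] => //.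
rewrite (_ : fst = f) //; apply/linear_differentiable => y.
exact: cvg_fst.
Qed.

Lemma differentiable_snd {U W : normedModType R} (u : U * W) :
  differentiable (@snd U W) u.
Proof.
have @f : {linear (U * W)%type -> W}.
  by exists (@snd U W); do 2![eexists]; do ?[constructor] => //.
rewrite (_ : snd = f) //; apply/linear_differentiable => y.
exact: cvg_snd.
Qed.

Context {V : normedModType R}.

Lemma differentiable_bigsum (I : Type) (r : seq I) (P : pred I)
    (F : I -> V -> R) v :
  (forall i, differentiable (F i) v) ->
  differentiable (fun w => \sum_(i <- r | P i) F i w) v.
Proof.
move=> dF; rewrite -fct_sumE; elim/big_ind: _ => // f g; exact: differentiableD.
Qed.

Definition mx_differentiable {a b : nat} (f : V -> 'M[R]_(a, b)) :=
  forall i j v, differentiable (fun w => f w i j) v.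

Lemma differentiable_mx a b (f : V -> 'M[R]_(a, b)) :
  (forall v, differentiable f v) -> mx_differentiable f.
Proof. by move=> df i j v; exact: differentiable_comp (df v) (differentiable_coord (f v) i j). Qed.

Lemma mx_differentiable_fst {W : normedModType R} a b (f : V -> 'M[R]_(a, b) * W) :
  (forall v, differentiable f v) -> mx_differentiable (fun w => (f w).1).
Proof.
by move=> df; apply: differentiable_mx => v; exact: differentiable_comp (df v) (differentiable_fst _).
Qed.

Lemma mx_differentiable_snd {W : normedModType R} a b (f : V -> W * 'M[R]_(a, b)) :
  (forall v, differentiable f v) -> mx_differentiable (fun w => (f w).2).
Proof.
by move=> df; apply: differentiable_mx => v; exact: differentiable_comp (df v) (differentiable_snd _).
Qed.

Lemma mx_differentiable_cst a b (A : 'M[R]_(a, b)) : mx_differentiable (fun=> A).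
Proof. by move=> i j v; exact: differentiable_cst. Qed.

Lemma mx_differentiableD a b (f g : V -> 'M[R]_(a, b)) :
  mx_differentiable f -> mx_differentiable g -> mx_differentiable (fun w => f w + g w).
Proof. by move=> df dg i j v; under eq_fun do rewrite mxE; exact: differentiableD. Qed.

Lemma mx_differentiableB a b (f g : V -> 'M[R]_(a, b)) :
  mx_differentiable f -> mx_differentiable g -> mx_differentiable (fun w => f w - g w).
Proof. by move=> df dg i j v; under eq_fun do rewrite !mxE; exact: differentiableB. Qed.

Lemma mx_differentiableM a b c (f : V -> 'M[R]_(a, b)) (g : V -> 'M[R]_(b, c)) :
  mx_differentiable f -> mx_differentiable g -> mx_differentiable (fun w => f w *m g w).
Proof.
move=> df dg i j v; under eq_fun do rewrite mxE.
by apply: differentiable_bigsum => k; exact: differentiableM.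
Qed.

Lemma mx_differentiable_map (s : R -> R) a b (f : V -> 'M[R]_(a, b)) :
  (forall r, differentiable s r) -> mx_differentiable f ->
  mx_differentiable (fun w => map_mx s (f w)).
Proof.
by move=> ds df i j v; under eq_fun do rewrite mxE; exact: differentiable_comp (df i j v) (ds _).
Qed.

End EntrywiseDifferentiable.

Section ClosedForm.
Context {R : realType} {n m T : nat} (sigma : R -> R) (gamma : R)
  (x : 'I_T.+1 -> 'cV[R]_m).
Implicit Types (q : policy R n m) (U : state R n T).

Lemma iter_S_traj q U k (t : 'I_T.+1) :
  (t <= k)%N -> iter k.+1 (S sigma x q) U t = traj sigma x q t.
Proof.
elim: k t => [|k IH] [[|j] jT] // jk.
rewrite iterS -[LHS]/(step sigma x q (iter k.+1 (S sigma x q) U (inord j)) (inord j)).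
by rewrite IH inordK // ltnW.
Qed.

Lemma iter_S_Utraj q U k : (T < k)%N -> iter k (S sigma x q) U = Utraj sigma x q.
Proof.
case: k => [//|k] Tk; apply/funext => t; rewrite iter_S_traj //.
by rewrite -ltnS (leq_trans (ltn_ord t)).
Qed.

Lemma S_Utraj q : S sigma x q (Utraj sigma x q) = Utraj sigma x q.
Proof. by rewrite -{1}(@iter_S_Utraj q (Utraj sigma x q) T.+1) // -iterS iter_S_Utraj. Qed.

(* The value of the series [J]: from step T+1 on the iterates are the fixed point [Utraj q]. *)
Definition J_closed q U : R :=
  \sum_(k < T.+1) gamma ^+ k * cost x (iter k (S sigma x q) U)
  + gamma ^+ T.+1 / (1 - gamma) * cost x (Utraj sigma x q).

Hypothesis gamma01 : 0 <= gamma < 1.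

Lemma JE q U : J sigma gamma x q U = J_closed q U.
Proof.
case/andP: gamma01 => g0 g1; rewrite /J; apply: cvg_lim => //.
rewrite -(cvg_shiftn T.+1) /=.
set c := cost x (Utraj sigma x q).
set A := \sum_(k < T.+1) gamma ^+ k * cost x (iter k (S sigma x q) U).
have partialE N : \sum_(0 <= k < N + T.+1) gamma ^+ k * cost x (iter k (S sigma x q) U)
    = A + series (geometric (gamma ^+ T.+1) gamma) N * c.
  rewrite (big_cat_nat _ (n := T.+1)) //= ?leq_addl // big_mkord; congr (_ + _).
  rewrite -geometric_partial_tail big_distrl /= addnC.
  by apply: eq_big_nat => k /andP[Tk _]; rewrite iter_S_Utraj.
under eq_fun do rewrite partialE.
apply: cvgD; first exact: cvg_cst.
by apply: cvgMr_tmp; apply: cvg_geometric_series; rewrite ger0_norm.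
Qed.

Lemma J_closed_bellman q U :
  J_closed q U = cost x U + gamma * J_closed q (S sigma x q U).
Proof.
rewrite /J_closed big_ord_recl big_ord_recr /= expr0 mul1r -iterSr iter_S_Utraj //.
have -> : \sum_(i < T) gamma ^+ bump 0 i * cost x (S sigma x q (iter (0 + i) (S sigma x q) U))
    = gamma * \sum_(i < T) gamma ^+ i * cost x (iter i (S sigma x q) (S sigma x q U)).
  by rewrite mulr_sumr; apply: eq_bigr => i _; rewrite -iterSr iterS exprS mulrA.
have one_sub_gamma_neq0 : 1 - gamma != 0 by case/andP: gamma01 => _ g1; rewrite subr_eq0 gt_eqF.
by rewrite exprS; field.
Qed.

Lemma J_bellman q U : J sigma gamma x q U = cost x U + gamma * J sigma gamma x q (S sigma x q U).
Proof. by rewrite !JE J_closed_bellman. Qed.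

End ClosedForm.

Section NetworkDifferentiable.
Context {R : realType} {n m T : nat} (sigma : R -> R) (gamma : R)
  (x : 'I_T.+1 -> 'cV[R]_m) {V : normedModType R}.
Hypothesis sigma_diff : forall r, differentiable sigma r.
Implicit Types (P : V -> policy R n m) (Us : V -> state R n T).

Definition state_differentiable Us := forall t, mx_differentiable (fun w => Us w t).

Lemma mx_differentiable_step P (u : V -> 'cV[R]_n) t :
  (forall v, differentiable P v) -> mx_differentiable u ->
  mx_differentiable (fun w => step sigma x (P w) (u w) t).
Proof.
move=> dP du; apply: mx_differentiable_map => //.
apply: mx_differentiableD; apply: mx_differentiableM => //.
- exact: mx_differentiable_fst.
- exact: mx_differentiable_snd.
Qed.

Lemma state_differentiable_S P Us :
  (forall v, differentiable P v) -> state_differentiable Us ->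
  state_differentiable (fun w => S sigma x (P w) (Us w)).
Proof.
move=> dP dU t; rewrite /S; case: (val t) => [|k]; first exact: mx_differentiable_cst.
exact: mx_differentiable_step.
Qed.

Lemma state_differentiable_iter P Us k :
  (forall v, differentiable P v) -> state_differentiable Us ->
  state_differentiable (fun w => iter k (S sigma x (P w)) (Us w)).
Proof. by move=> dP dU; elim: k => [|k IH] //=; exact: state_differentiable_S. Qed.

Lemma state_differentiable_Utraj P :
  (forall v, differentiable P v) -> state_differentiable (fun w => Utraj sigma x (P w)).
Proof.
move=> dP t; rewrite /Utraj; elim: (val t) => [|k IH] /=; first exact: mx_differentiable_cst.
exact: mx_differentiable_step.
Qed.

Lemma differentiable_cost Us v :
  state_differentiable Us -> differentiable (fun w => cost x (Us w)) v.
Proof.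
move=> dU; apply: differentiable_bigsum => t; apply: differentiable_bigsum => i.
under eq_fun do rewrite expr2.
have dE : mx_differentiable (fun w => H R n m *m Us w t - x t).
  by apply: mx_differentiableB; [apply: mx_differentiableM => // | ]; exact: mx_differentiable_cst.
by apply: differentiableM; exact: dE.
Qed.

Lemma differentiable_J_closed P Us v :
  (forall v, differentiable P v) -> state_differentiable Us ->
  differentiable (fun w => J_closed sigma gamma x (P w) (Us w)) v.
Proof.
move=> dP dU; apply: differentiableD.
  apply: differentiable_bigsum => k; apply: differentiableM; first exact: differentiable_cst.
  by apply: differentiable_cost; exact: state_differentiable_iter.
apply: differentiableM; first exact: differentiable_cst.
by apply: differentiable_cost; exact: state_differentiable_Utraj.
Qed.

End NetworkDifferentiable.

Section DirectionalDerivative.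
Context {R : realType}.

Lemma is_derive_line_affine {V W : normedModType R} {f : V -> R} {g : W -> R}
    {a v : V} {b w : W} {c k : R} :
  (forall h : R, f (h *: v + a) = c + k * g (h *: w + b)) -> derivable g b w ->
  is_derive a v f (k * 'D_w g b).
Proof.
move=> fg dg.
have fg0 : f a = c + k * g b by have := fg 0; rewrite !scale0r !add0r.
have quotE : (fun h => h^-1 *: ((f \o shift a) (h *: v) - f a)) =
    k *: (fun h => h^-1 *: ((g \o shift b) (h *: w) - g b)).
  apply/funext => h; rewrite /= /shift fg fg0.
  rewrite -[RHS]/(k * (h^-1 * (g (h *: w + b) - g b))) -[LHS]/(h^-1 * _); ring.
split; rewrite /derivable /derive quotE; first exact: is_cvgZl_tmp.
exact: limZl_tmp.
Qed.

Lemma derive_lt0_descent {V : normedModType R} {f : V -> R} {a v : V} :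
  derivable f a v -> 'D_v f a < 0 ->
  exists d : R, 0 < d /\ forall h : R, 0 < h <= d -> f (h *: v + a) < f a.
Proof.
move=> df Dlt0.
have /(_ _) /nbhs_ballP[e /= e_gt0 quot_lt0] := @cvgr_lt R R (0 : R)^'%classic _ _ _ df _ Dlt0.
exists (e / 2); split=> [|h /andP[h_gt0 h_le]]; first by rewrite divr_gt0.
have h_ball : ball (0 : R) e h.
  rewrite /ball /= sub0r normrN gtr0_norm //; apply: le_lt_trans h_le _.
  by rewrite ltr_pdivrMr // ltr_pMr // ltr1n.
have := quot_lt0 h h_ball (lt0r_neq0 h_gt0).
rewrite /= /shift -[X in X < _ -> _]/(h^-1 * (f (h *: v + a) - f a)).
by rewrite pmulr_rlt0 ?invr_gt0 // subr_lt0.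
Qed.

End DirectionalDerivative.

Section PairSum.
Context {U W : zmodType} (I : Type) (r : seq I) (P : pred I) (F : I -> U * W).

Lemma fst_sum : (\sum_(i <- r | P i) F i).1 = \sum_(i <- r | P i) (F i).1.
Proof. exact: (big_morph fst). Qed.

Lemma snd_sum : (\sum_(i <- r | P i) F i).2 = \sum_(i <- r | P i) (F i).2.
Proof. exact: (big_morph snd). Qed.

End PairSum.

Section SumSquares.
Context {R : realType} {a b : nat}.

Lemma sum_sqr_mx_ge0 (M : 'M[R]_(a, b)) : 0 <= \sum_i \sum_j M i j ^+ 2.
Proof. by apply: sumr_ge0 => i _; apply: sumr_ge0 => j _; exact: sqr_ge0. Qed.

Lemma sum_sqr_mx_gt0 (M : 'M[R]_(a, b)) : M != 0 -> 0 < \sum_i \sum_j M i j ^+ 2.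
Proof.
move=> M_neq0; have /existsP[i /existsP[j Mij_neq0]] : [exists i, exists j, M i j != 0].
  apply: contraNT M_neq0 => /existsPn M0; apply/eqP/matrixP => i j.
  by have /existsPn/(_ j)/negPn/eqP := M0 i; rewrite mxE.
rewrite (bigD1 i) //= (bigD1 j) //= -addrA ltr_pwDl //.
  by rewrite lt_def sqrf_eq0 Mij_neq0 sqr_ge0.
apply: addr_ge0; apply: sumr_ge0 => k _; first exact: sqr_ge0.
by apply: sumr_ge0 => l _; exact: sqr_ge0.
Qed.

End SumSquares.

Section Gradient.
Context {R : realType} {n m : nat}.
Implicit Types (f : policy R n m -> R) (p v : policy R n m).

Lemma pderivE f p v : differentiable f p -> pderiv f p v = 'd f p v.
Proof.
move=> df; rewrite /pderiv derive1E -deriveE //.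
have lineE (h : R) : f (p + (h *: 1 + 0) *: v) = 0 + 1 * f (h *: v + p).
  by rewrite addr0 -[h *: 1]/(h * 1) mulr1 add0r mul1r addrC.
have [_ ->] := is_derive_line_affine (f := fun h : R => f (p + h *: v)) lineE (diff_derivable df).
by rewrite mul1r.
Qed.

Lemma policy_sum_delta v :
  v = \sum_i \sum_j v.1 i j *: ((delta_mx i j, 0) : policy R n m)
      + \sum_i \sum_j v.2 i j *: ((0, delta_mx i j) : policy R n m).
Proof.
case: v => A B; rewrite [RHS]surjective_pairing /=; congr pair.
- rewrite !fst_sum [X in _ = _ + X]big1 ?addr0 => [|i _]; last first.
    by rewrite fst_sum big1 // => j _; rewrite /= scaler0.
  by rewrite {1}(matrix_sum_delta A); apply: eq_bigr => i _; rewrite fst_sum.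
- rewrite !snd_sum [X in _ = X + _]big1 ?add0r => [|i _]; last first.
    by rewrite snd_sum big1 // => j _; rewrite /= scaler0.
  by rewrite {1}(matrix_sum_delta B); apply: eq_bigr => i _; rewrite snd_sum.
Qed.

Lemma diff_policyE f p v : differentiable f p ->
  'd f p v = \sum_i \sum_j v.1 i j * (grad f p).1 i j
             + \sum_i \sum_j v.2 i j * (grad f p).2 i j.
Proof.
move=> df; rewrite {1}[v]policy_sum_delta linearD !linear_sum /=.
by congr (_ + _); apply: eq_bigr => i _; rewrite linear_sum; apply: eq_bigr => j _;
  rewrite linearZ /= mxE pderivE.
Qed.

Lemma diff_opp_grad_lt0 f p : differentiable f p -> grad f p != 0 ->
  'd f p (- grad f p) < 0.
Proof.
move=> df grad_neq0; rewrite linearN oppr_lt0 diff_policyE //.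
under eq_bigr do under eq_bigr do rewrite -expr2.
under [X in _ < _ + X]eq_bigr do under eq_bigr do rewrite -expr2.
have := sum_sqr_mx_ge0 (grad f p).1; have := sum_sqr_mx_ge0 (grad f p).2.
have [g1_0|/sum_sqr_mx_gt0] := eqVneq (grad f p).1 0; last by lra.
have /sum_sqr_mx_gt0 : (grad f p).2 != 0.
  by apply: contraNneq grad_neq0 => g2_0; rewrite [grad f p]surjective_pairing g1_0 g2_0.
lra.
Qed.

End Gradient.

Section PolicyImprovement.
Context {R : realType} {n m T : nat} (sigma : R -> R) (gamma : R)
  (x : 'I_T.+1 -> 'cV[R]_m) (p0 : policy R n m).
Hypotheses (sigma_diff : forall r, differentiable sigma r) (gamma01 : 0 <= gamma < 1).

Definition J_cross (w : policy R n m * policy R n m) : R :=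
  J sigma gamma x w.1 (S sigma x w.2 (Utraj sigma x p0)).

Lemma differentiable_J_cross w : differentiable J_cross w.
Proof.
rewrite /J_cross; under eq_fun do rewrite JE //.
apply: differentiable_J_closed => //; first exact: differentiable_fst.
apply: state_differentiable_S => //; first exact: differentiable_snd.
by move=> t; exact: mx_differentiable_cst.
Qed.

Lemma differentiable_Jprime q : differentiable (Jprime sigma gamma x p0) q.
Proof.
rewrite /Jprime; under eq_fun do rewrite JE //.
apply: differentiableD; first exact: differentiable_cst.
apply: differentiableM; first exact: differentiable_cst.
apply: differentiable_J_closed => //. Show.
apply: state_differentiable_S => //.
by move=> t; exact: mx_differentiable_cst.
Qed.

Lemma is_derive_J_policy v :
  is_derive p0 v (fun q => J sigma gamma x q (Utraj sigma x p0))
    (gamma * 'D_(v, v) J_cross (p0, p0)).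
Proof.
apply: is_derive_line_affine (diff_derivable (differentiable_J_cross _)) => h.
exact: J_bellman.
Qed.

Lemma derive_J_policy v :
  (1 - gamma) * 'D_v (fun q => J sigma gamma x q (Utraj sigma x p0)) p0
  = 'D_v (Jprime sigma gamma x p0) p0.
Proof.
have dJ_cross := differentiable_J_cross (p0, p0).
have [dJ DJ] := is_derive_J_policy v.
have [_ DJ_cross_l] : is_derive (p0, p0) (v, 0) J_cross
    (1 * 'D_v (fun q => J sigma gamma x q (Utraj sigma x p0)) p0).
  apply: (is_derive_line_affine (c := 0) _ dJ) => h.
  by rewrite /J_cross /= scaler0 add0r S_Utraj add0r mul1r.
have [_ DJ_cross_r] : is_derive p0 v (Jprime sigma gamma x p0)
    (gamma * 'D_(0, v) J_cross (p0, p0)).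
  apply: is_derive_line_affine (diff_derivable dJ_cross) => h.
  by rewrite /Jprime /J_cross /= scaler0 add0r.
have DJ_cross_split : 'D_(v, v) J_cross (p0, p0)
    = 'D_(v, 0) J_cross (p0, p0) + 'D_(0, v) J_cross (p0, p0).
  have -> : ((v, v) : policy R n m * policy R n m) = (v, 0) + (0, v).
    by rewrite [RHS]surjective_pairing /= addr0 add0r.
  by rewrite !deriveE // linearD.
have DJprime : 'D_v (Jprime sigma gamma x p0) p0 = gamma * 'D_(0, v) J_cross (p0, p0).
  exact: DJ_cross_r.
rewrite DJ_cross_split DJ_cross_l mul1r in DJ.
have affine_eq (a b c : R) : a = gamma * (a + b) -> c = gamma * b -> (1 - gamma) * a = c.
  by move=> a_eq ->; rewrite mulrBl mul1r {1}a_eq; ring.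
exact: affine_eq DJ DJprime.
Qed.

End PolicyImprovement.

Theorem lemma2 (R : realType) (n m T : nat) (gamma : R)
  (x : 'I_T.+1 -> 'cV[R]_m) (sigma : R -> R) (Fi : 'M[R]_n) (Gi : 'M[R]_(n, m + 1)) :
  (m < n)%N -> (1 <= m)%N -> (1 <= T)%N -> 0 < gamma < 1 ->
  (forall r : R, -1 <= sigma r <= 1) ->
  (forall r : R, derivable sigma r 1) -> continuous (derive1 sigma) ->
  Dpi sigma gamma x (Fi, Gi) != 0 ->
  exists alpha0 : R, 0 < alpha0 /\
    forall alpha : R, 0 < alpha <= alpha0 ->
      J sigma gamma x ((Fi, Gi) + alpha *: Dpi sigma gamma x (Fi, Gi)) (Utraj sigma x (Fi, Gi))
      < J sigma gamma x (Fi, Gi) (Utraj sigma x (Fi, Gi)).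
Proof.
move=> _ _ _ /andP[gamma_gt0 gamma_lt1] _ sigma_derivable _ Dpi_neq0.
have sigma_diff r : differentiable sigma r by apply/derivable1_diffP.
have gamma01 : 0 <= gamma < 1 by rewrite (ltW gamma_gt0) gamma_lt1.
set p0 := (Fi, Gi); set D := Dpi sigma gamma x p0.
have Jprime_lt0 : 'D_D (Jprime sigma gamma x p0) p0 < 0.
  rewrite deriveE; last exact: differentiable_Jprime.
  by apply: diff_opp_grad_lt0; [exact: differentiable_Jprime | rewrite -oppr_eq0].
have J_lt0 : 'D_D (fun q => J sigma gamma x q (Utraj sigma x p0)) p0 < 0.
  by move: Jprime_lt0; rewrite -derive_J_policy // pmulr_rlt0 // subr_gt0.
have [dJ _] := is_derive_J_policy sigma gamma x p0 sigma_diff gamma01 D.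
have [d [d_gt0 J_descent]] := derive_lt0_descent dJ J_lt0.
exists d; split=> [//|alpha alpha_range].
by rewrite addrC; exact: J_descent.
Qed.
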